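(* Let $a\in[0,\infty)$ and let $\theta:[0,1]\to[0,\infty]$ and $\vartheta:[0,\infty]\to[0,1]$ be continuous and decreasing functions such that $O_{\theta,\vartheta}(x,y)=\vartheta(\theta(x)+\theta(y))$ defines an overlap function $O_{\theta,\vartheta}:[0,1]^2\to[0,1]$. Suppose $\theta(x)=\frac{a}{2}$ if and only if $x=1$. Then the following are equivalent: (1) $O_{\theta,\vartheta}$ is a t-norm; (2) $1$ is a neutral element of $O_{\theta,\vartheta}$; (3) $\vartheta(\theta(x)+\frac{a}{2})=x$ for all $x\in[0,1]$.
   Context: ''Decreasing'' means non-increasing and ''increasing'' means non-decreasing. Arithmetic in $[0,\infty]$ uses $c+\infty=\infty$; continuity on $[0,\infty]$ refers to the usual topology of the extended half-line. An overlap function is a map $O:[0,1]^2\to[0,1]$ that is (O1) commutative, (O2) $O(x,y)=0$ iff $xy=0$, (O3) $O(x,y)=1$ iff $xy=1$, (O4) increasing in each variable, (O5) continuous. A t-norm is a commutative, associative map $T:[0,1]^2\to[0,1]$, increasing in each variable, with $T(x,1)=x$ for all $x$. *)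

From HB Require Import structures.
From mathcomp Require Import all_boot all_order all_algebra.
From mathcomp Require Import all_classical all_reals all_analysis.
Set Implicit Arguments. Unset Strict Implicit. Unset Printing Implicit Defensive.
Import Order.TTheory GRing.Theory Num.Theory.
Import numFieldNormedType.Exports.
Local Open Scope classical_set_scope.
Local Open Scope ring_scope.

Section Defs.
Variable R : realType.

Definition unitI : set R := [set x | 0 <= x <= 1].
Definition extHL : set (\bar R) := [set x | (0 <= x)%E].

(* overlap function O : [0,1]^2 -> [0,1] (O given as total map, constrained on [0,1]^2) *)
Definition is_overlap (O : R -> R -> R) : Prop :=
  (forall x y, unitI x -> unitI y -> unitI (O x y)) /\
  (forall x y, unitI x -> unitI y -> O x y = O y x) /\
  (forall x y, unitI x -> unitI y -> (O x y = 0 <-> x * y = 0)) /\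
  (forall x y, unitI x -> unitI y -> (O x y = 1 <-> x * y = 1)) /\
  (forall x x' y, unitI x -> unitI x' -> unitI y -> x <= x' -> O x y <= O x' y) /\
  (forall x y y', unitI x -> unitI y -> unitI y' -> y <= y' -> O x y <= O x y') /\
  {within [set p : R * R | unitI p.1 /\ unitI p.2], continuous (fun p => O p.1 p.2)}.

Definition is_tnorm (T : R -> R -> R) : Prop :=
  (forall x y, unitI x -> unitI y -> unitI (T x y)) /\
  (forall x y, unitI x -> unitI y -> T x y = T y x) /\
  (forall x y z, unitI x -> unitI y -> unitI z -> T x (T y z) = T (T x y) z) /\
  (forall x x' y, unitI x -> unitI x' -> unitI y -> x <= x' -> T x y <= T x' y) /\
  (forall x y y', unitI x -> unitI y -> unitI y' -> y <= y' -> T x y <= T x y') /\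
  (forall x, unitI x -> T x 1 = x).

Definition is_neutral (O : R -> R -> R) (e : R) : Prop :=
  forall x, unitI x -> O x e = x /\ O e x = x.

Definition Otv (theta : R -> \bar R) (vartheta : \bar R -> R) (x y : R) : R :=
  vartheta (theta x + theta y)%E.

End Defs.
Arguments unitI R : clear implicits.
Arguments extHL R : clear implicits.

(* With h := theta 1 = a/2, condition (3) says vartheta (theta x + h) = x.  For s >= h
   this gives vartheta (theta x + theta (vartheta (s + h))) = vartheta (theta x + s): if
   s <= theta 0 then s = theta y by the intermediate value theorem, and otherwise both
   sides vanish because vartheta is 0 beyond theta 0 + h.  Taking s = theta y + theta z - h
   yields O(x, O(y, z)) = vartheta (theta x + theta y + theta z - h), which is symmetric in
   x, y, z; so O is associative, and (3) also makes 1 neutral. *)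
From HB Require Import structures.
From mathcomp Require Import all_boot all_order all_algebra.
From mathcomp Require Import all_classical all_reals all_analysis.
Import Order.TTheory GRing.Theory Num.Theory.
Import numFieldNormedType.Exports.
Set Implicit Arguments. Unset Strict Implicit. Unset Printing Implicit Defensive.
Local Open Scope classical_set_scope.
Local Open Scope ring_scope.

Lemma contract_continuous (R : realType) : continuous (@contract R).
Proof.
(* Balls of \bar R are defined through [contract]. *)
move=> x; apply/cvgrPdist_lt => e e0.
by apply: filterS (nbhsx_ballx x e e0) => y.
Qed.

Lemma ereal_IVT (R : realType) (f : R -> \bar R) (a b : R) (v : \bar R) :
  a <= b -> {within `[a, b], continuous f} ->
  (Order.min (f a) (f b) <= v <= Order.max (f a) (f b))%E ->
  exists2 c, c \in `[a, b] & f c = v.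
Proof.
move=> leab fcont fabv.
have [x||c cab /contract_inj fcv] :=
  @IVT _ (fun x => contract (f x)) a b (contract v) leab.
- exact: continuous_comp (fcont x) (@contract_continuous R _).
- by rewrite ge_min le_max !le_contract -ge_min -le_max.
- by exists c.
Qed.

Lemma unitI0 (R : realType) : unitI R 0.
Proof. by rewrite /unitI /= lexx ler01. Qed.

Lemma unitI1 (R : realType) : unitI R 1.
Proof. by rewrite /unitI /= lexx ler01. Qed.

Lemma tnorm_neutral1 (R : realType) (T : R -> R -> R) : is_tnorm T -> is_neutral T 1.
Proof.
case=> _ [Tcomm [_ [_ [_ T1]]]] x xI.
have I1 := unitI1 R.
by split; [exact: T1 | rewrite Tcomm // T1].
Qed.

Section OtvTheory.
Variables (R : realType) (theta : R -> \bar R) (vartheta : \bar R -> R) (h : R).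
Local Notation O := (Otv theta vartheta).
Local Notation I := (unitI R).

Lemma Otv_comm x y : O x y = O y x.
Proof. by rewrite /Otv addeC. Qed.

Hypothesis theta1 : theta 1 = h%:E.

Lemma neutral1_OtvE :
  is_neutral O 1 <-> forall x, I x -> vartheta (theta x + h%:E)%E = x.
Proof.
split=> [neutral1 x xI | id1 x xI]; first by have [] := neutral1 x xI; rewrite /Otv theta1.
by split; last rewrite Otv_comm; rewrite /Otv theta1 id1.
Qed.

Hypothesis theta_ge0 : forall x, I x -> extHL R (theta x).
Hypothesis theta_cont : {within I, continuous theta}.
Hypothesis theta_decr : forall x y, I x -> I y -> x <= y -> (theta y <= theta x)%E.
Hypothesis vartheta_in : forall u, extHL R u -> I (vartheta u).
Hypothesis vartheta_decr :
  forall u v, extHL R u -> extHL R v -> (u <= v)%E -> vartheta v <= vartheta u.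
Hypothesis vartheta_theta : forall x, I x -> vartheta (theta x + h%:E)%E = x.

Lemma h_le_theta x : I x -> (h%:E <= theta x)%E.
Proof.
move=> xI; rewrite -theta1; case/andP: (xI) => _ x1.
exact: theta_decr xI (unitI1 R) x1.
Qed.

Lemma vartheta_eq0 u : (theta 0 + h%:E <= u)%E -> vartheta u = 0.
Proof.
move=> le_u.
have h0 : (0 <= h%:E)%E by rewrite -theta1; exact: theta_ge0 (unitI1 R).
have e0 : extHL R (theta 0 + h%:E)%E := adde_ge0 (theta_ge0 (unitI0 R)) h0.
have eu : extHL R u by apply: le_trans le_u.
apply/le_anti; rewrite (andP (vartheta_in eu)).1 andbT.
by rewrite -(vartheta_theta (unitI0 R)) vartheta_decr.
Qed.

Lemma theta_onto s : (h%:E <= s <= theta 0)%E -> exists2 y, I y & theta y = s.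
Proof.
move=> hs.
have [y y01 <-] : exists2 y, y \in `[0, 1] & theta y = s.
  apply: ereal_IVT ler01 _ _.
    by move=> y; apply: theta_cont; rewrite /unitI.
  by rewrite theta1 (min_idPr (h_le_theta (unitI0 R))) (max_idPl (h_le_theta (unitI0 R))).
by exists y; rewrite // /unitI /= -in_itv.
Qed.

Lemma vartheta_add_theta_vartheta x s : I x -> (h%:E <= s)%E ->
  vartheta (theta x + theta (vartheta (s + h%:E)))%E = vartheta (theta x + s)%E.
Proof.
move=> xI hs; have [s0 | lt0s] := leP s (theta 0).
  by have [y yI <-] := theta_onto (introT andP (conj hs s0)); rewrite vartheta_theta.
rewrite [vartheta (s + _)]vartheta_eq0 ?leeD2r ?ltW //.
have hx := h_le_theta xI.
by rewrite !vartheta_eq0 // addeC leeD // ltW.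
Qed.

Lemma Otv_OtvE x y z : I x -> I y -> I z ->
  O x (O y z) = vartheta (theta x + theta y + theta z - h%:E)%E.
Proof.
move=> xI yI zI; rewrite /Otv.
have hs : (h%:E <= theta y + (theta z - h%:E))%E.
  by rewrite -[X in (X <= _)%E]adde0 leeD ?h_le_theta // sube_ge0 ?h_le_theta.
have -> : (theta y + theta z = theta y + (theta z - h%:E) + h%:E)%E by rewrite -addeA subeK.
by rewrite vartheta_add_theta_vartheta // !addeA.
Qed.

Lemma Otv_assoc x y z : I x -> I y -> I z -> O x (O y z) = O (O x y) z.
Proof.
move=> xI yI zI; rewrite [in RHS]Otv_comm !Otv_OtvE //.
by congr (vartheta (_ - _)); rewrite addeC addeA.
Qed.

Lemma Otv_tnorm : is_overlap O -> is_tnorm O.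
Proof.
case=> Orange [Ocomm [_ [_ [Omono_l [Omono_r _]]]]].
do 2 split=> //; split; first exact: Otv_assoc.
do 2 split=> //.
by move=> x xI; rewrite /Otv theta1 vartheta_theta.
Qed.

End OtvTheory.

Theorem theorem4p1 (R : realType) (a : R) (theta : R -> \bar R) (vartheta : \bar R -> R) :
  0 <= a ->
  (* theta : [0,1] -> [0,oo], continuous and decreasing *)
  (forall x, unitI R x -> extHL R (theta x)) ->
  {within unitI R, continuous theta} ->
  (forall x y, unitI R x -> unitI R y -> x <= y -> (theta y <= theta x)%E) ->
  (* vartheta : [0,oo] -> [0,1], continuous and decreasing *)
  (forall u, extHL R u -> unitI R (vartheta u)) ->
  {within extHL R, continuous vartheta} ->
  (forall u v, extHL R u -> extHL R v -> (u <= v)%E -> vartheta v <= vartheta u) ->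
  is_overlap (Otv theta vartheta) ->
  (forall x, unitI R x -> (theta x = (a / 2)%:E <-> x = 1)) ->
  (is_tnorm (Otv theta vartheta) <-> is_neutral (Otv theta vartheta) 1) /\
  (is_neutral (Otv theta vartheta) 1 <->
     forall x, unitI R x -> vartheta (theta x + (a / 2)%:E)%E = x).
Proof.
move=> _ theta_ge0 theta_cont theta_decr vartheta_in _ vartheta_decr overlap theta_eq.
have theta1 : theta 1 = (a / 2)%:E by apply/(theta_eq 1 (unitI1 R)).
have neutral1E := neutral1_OtvE vartheta theta1.
split; last exact: neutral1E.
split; first exact: tnorm_neutral1.
move/neutral1E => vartheta_theta.
exact: Otv_tnorm theta1 theta_ge0 theta_cont theta_decr vartheta_in vartheta_decr
  vartheta_theta overlap.
Qed.
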